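(* Let $n\ge2$. For $0\le p,q\le n$ let $d^n_{p,q}$ be the number of tuples $(i_1,\dots,i_p,j_1,\dots,j_q)$ with $1\le i_1<\dots<i_p\le n$, $1\le j_1<\dots<j_q\le n$ and $\sum_{r=1}^p i_r=\sum_{s=1}^q j_s$ (empty sums equal $0$; thus $d^n_{0,0}=1$, $d^n_{1,0}=d^n_{0,1}=0$), and for $0\le k\le 2n$ let $D^n_k=\sum_{p+q=k}d^n_{p,q}$. Then: (i) $d^n_{1,1}=d^n_{n-1,n-1}=n$ and $d^n_{k,k}\equiv\binom nk\pmod 2$; (ii) if $n$ is even then $d^n_{1,2}=\frac{n(n-2)}4$, and if $n$ is odd then $d^n_{1,2}=\left(\frac{n-1}2\right)^2$; (iii) $D^n_k=D^n_{2n-k}$ for $k=0,\dots,n$, and $D^n_0=1$, $D^n_1=0$, $D^n_2=n$; (iv) if $k$ is odd then $D^n_k$ is even; (v) $D^n_{2k}\equiv\binom nk\pmod 2$. *)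

From mathcomp Require Import all_boot.
Set Implicit Arguments.
Unset Strict Implicit.
Unset Printing Implicit Defensive.

(* An increasing tuple 1 <= i_1 < ... < i_p <= n is encoded as a subset
   I of 'I_n (element i : 'I_n stands for the integer i+1) with #|I| = p. *)
Definition setsum n (I : {set 'I_n}) : nat := \sum_(i in I) i.+1.

Definition dnum (n p q : nat) : nat :=
  #|[set IJ : {set 'I_n} * {set 'I_n} |
      [&& #|IJ.1| == p, #|IJ.2| == q & setsum IJ.1 == setsum IJ.2]]|.

Definition Dnum (n k : nat) : nat := \sum_(p < k.+1) dnum n p (k - p).

From mathcomp Require Import all_boot zify.

Set Implicit Arguments.
Unset Strict Implicit.
Unset Printing Implicit Defensive.

(* An involution of a finite set fixes as many points as the set has, modulo 2.
   Swapping (I, J) |-> (J, I) preserves the sets counted by d^n_{k,k} and D^n_k,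
   and its fixed points are the diagonal pairs (I, I), counted by binomial
   coefficients; for odd k there are none.  Complementing (I, J) |-> (I^c, J^c)
   preserves the equality of sums, since the sum over I^c is n(n+1)/2 minus the
   sum over I, and turns sizes (p, q) into (n - p, n - q), which gives the
   symmetries.  Finally d^n_{1,2} counts the pairs j_1 < j_2 with
   j_1 + j_2 <= n. *)

Section Involution.

Variables (T : finType) (f : T -> T).
Hypothesis fK : involutive f.

Lemma card_involution_eq (A B : {set T}) :
  {in A, forall x, f x \in B} -> {in B, forall x, f x \in A} -> #|A| = #|B|.
Proof.
have card_le (X Y : {set T}) : {in X, forall x, f x \in Y} -> #|X| <= #|Y|.
  move=> fXY; rewrite -(card_imset X (inv_inj fK)); apply: subset_leq_card.
  by apply/subsetP=> _ /imsetP[x Xx ->]; exact: fXY.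
by move=> fAB fBA; apply/eqP; rewrite eqn_leq !card_le.
Qed.

(* The points of A moved by f come in pairs {x, f x}; those with
   [enum_rank x < enum_rank (f x)] pick one point from each pair. *)
Lemma odd_card_involution (A : {set T}) : {in A, forall x, f x \in A} ->
  odd #|A| = odd #|[set x in A | f x == x]|.
Proof.
move=> fA; pose L := [set x in A | enum_rank x < enum_rank (f x)].
have rank_neq x : (enum_rank x == enum_rank (f x)) = (f x == x).
  by rewrite (inj_eq enum_rank_inj) eq_sym.
have moved : A :\: [set x in A | f x == x] = L :|: f @: L.
  apply/setP=> x; rewrite !inE; apply/idP/idP.
  - case/andP=> + Ax; rewrite Ax /= => xfx.
    case: ltngtP => [//|lt|/val_inj/eqP]; last by rewrite rank_neq (negPf xfx).
    apply/imsetP; exists (f x); last by rewrite fK.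
    by rewrite !inE fA //= fK.
  - case/orP=> [/andP[Ax lt]|/imsetP[y]].
      by rewrite Ax andbT -rank_neq neq_ltn lt.
    rewrite inE => /andP[Ay lt] ->.
    by rewrite fA // andbT -rank_neq fK neq_ltn lt orbT.
have disj : [disjoint L & f @: L].
  rewrite -setI_eq0; apply/eqP/setP=> x; rewrite !inE.
  apply/negP=> /andP[/andP[_ lt] /imsetP[y]].
  rewrite inE => /andP[_ lty] xfy.
  by move: lt; rewrite xfy fK ltnNge ltnW.
have fixedA : A :&: [set x in A | f x == x] = [set x in A | f x == x].
  by apply/setIidPr/subsetP=> x; rewrite inE => /andP[].
rewrite -(cardsID [set x in A | f x == x] A) fixedA moved cardsU.
rewrite disjoint_setI0 // cards0 subn0 card_imset ?addnn; last exact: inv_inj.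
by rewrite oddD odd_double addbF.
Qed.

End Involution.

Section Pairs.

Variable n : nat.
Implicit Types (I J : {set 'I_n}) (A : {set {set 'I_n} * {set 'I_n}}).

Lemma setsum1 (i : 'I_n) : setsum [set i] = i.+1.
Proof. by rewrite /setsum big_set1. Qed.

Lemma setsum2 (i j : 'I_n) : i != j -> setsum [set i; j] = i.+1 + j.+1.
Proof. by move=> ij; rewrite /setsum big_setU1 ?big_set1 ?inE. Qed.

Lemma setsum_eq0 I : (setsum I == 0) = (I == set0).
Proof.
apply/eqP/eqP=> [|->]; last by rewrite /setsum big_set0.
by case: (set_0Vmem I) => [//|[i iI]]; rewrite /setsum (bigD1 i).
Qed.

Lemma eq_setsum_card_eq0 I J : setsum I = setsum J -> (#|I| == 0) = (#|J| == 0).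
Proof. by move=> IJ; rewrite !cards_eq0 -!setsum_eq0 IJ. Qed.

Lemma setsumC I : setsum I + setsum (~: I) = setsum [set: 'I_n].
Proof. by rewrite /setsum [RHS](big_setID I) /= setTI setTD. Qed.

Lemma eq_setsumC I J : (setsum (~: I) == setsum (~: J)) = (setsum I == setsum J).
Proof. by have := setsumC I; have := setsumC J => hJ hI; apply/eqP/eqP; lia. Qed.

Lemma card_setC I : #|~: I| = n - #|I|.
Proof. by rewrite cardsCs setCK card_ord. Qed.

Lemma card_set_leq I : #|I| <= n.
Proof. by rewrite -[leqRHS]card_ord -cardsT subset_leq_card ?subsetT. Qed.

Lemma odd_card_swap_stable A : {in A, forall IJ, swap_pair IJ \in A} ->
  odd #|A| = odd #|[set I | (I, I) \in A]|.
Proof.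
move=> swapA; rewrite (odd_card_involution swap_pairK swapA).
have -> : [set IJ in A | swap_pair IJ == IJ] = (fun I => (I, I)) @: [set I | (I, I) \in A].
  apply/setP=> -[I J]; rewrite !inE /swap_pair /= xpair_eqE; apply/idP/imsetP.
  - case/and3P=> IJA /eqP JI _; rewrite JI in IJA *.
    by exists I; rewrite ?inE.
  - by case=> K; rewrite inE => KA [-> ->]; rewrite KA eqxx.
by rewrite card_imset // => I J [].
Qed.

End Pairs.

Definition balanced_pairs n k : {set {set 'I_n} * {set 'I_n}} :=
  [set IJ : {set 'I_n} * {set 'I_n} |
     (#|IJ.1| + #|IJ.2| == k) && (setsum IJ.1 == setsum IJ.2)].

Lemma Dnum_balanced_pairs n k : Dnum n k = #|balanced_pairs n k|.
Proof.
pose card1 (IJ : {set 'I_n} * {set 'I_n}) : 'I_k.+1 := inord #|IJ.1|.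
rewrite -sum1_card (partition_big card1 predT) //= /Dnum /dnum.
apply: eq_bigr => p _; rewrite -sum1_card; apply: eq_bigl => -[I J].
rewrite !inE /= /card1 andbA [RHS]andbAC; congr (_ && _).
move: (ltn_ord p) (#|I|) (#|J|) => pk a b.
case: (leqP a k) => [ak|ka]; first by rewrite -(inj_eq val_inj) /= inordK //; lia.
by apply/andP/andP=> -[/eqP h _]; exfalso; lia.
Qed.

Definition compl_pair n (IJ : {set 'I_n} * {set 'I_n}) := (~: IJ.1, ~: IJ.2).

Lemma compl_pairK n : involutive (@compl_pair n).
Proof. by case=> I J; rewrite /compl_pair /= !setCK. Qed.

Lemma dnum_compl n p q : p <= n -> q <= n -> dnum n (n - p) (n - q) = dnum n p q.
Proof.
move=> pn qn; apply: (card_involution_eq (@compl_pairK n)) => -[I J];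
  rewrite !inE /compl_pair /= eq_setsumC !card_setC => /and3P[/eqP-> /eqP-> ->];
  by rewrite ?subKn ?eqxx.
Qed.

Lemma Dnum_compl n k : k <= 2 * n -> Dnum n (2 * n - k) = Dnum n k.
Proof.
move=> kn; rewrite !Dnum_balanced_pairs.
apply: (card_involution_eq (@compl_pairK n)) => -[I J];
  rewrite !inE /compl_pair /= eq_setsumC !card_setC => /andP[+ ->];
  move: (card_set_leq I) (card_set_leq J); move: #|I| #|J| => a b an bn /eqP ab;
  rewrite andbT; apply/eqP; lia.
Qed.

Lemma odd_dnum_diag n k : odd (dnum n k k) = odd 'C(n, k).
Proof.
rewrite /dnum odd_card_swap_stable => [|[I J]]; last first.
  by rewrite !inE /swap_pair /= => /and3P[-> -> /eqP->]; rewrite eqxx.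
congr (odd _); rewrite -[n in 'C(n, _)]card_ord -card_draws.
by apply: eq_card => I; rewrite !inE eqxx andbT andbb.
Qed.

Lemma balanced_pairs_swap (n k : nat) :
  {in balanced_pairs n k, forall IJ, swap_pair IJ \in balanced_pairs n k}.
Proof.
by move=> [I J]; rewrite !inE /swap_pair /= => /andP[/eqP<- /eqP->]; rewrite addnC !eqxx.
Qed.

Lemma odd_Dnum_double n k : odd (Dnum n (2 * k)) = odd 'C(n, k).
Proof.
rewrite Dnum_balanced_pairs odd_card_swap_stable; last exact: balanced_pairs_swap.
congr (odd _); rewrite -[n in 'C(n, _)]card_ord -card_draws.
by apply: eq_card => I; rewrite !inE eqxx andbT addnn -mul2n eqn_pmul2l.
Qed.

Lemma even_Dnum_odd n k : odd k -> ~~ odd (Dnum n k).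
Proof.
move=> k_odd; rewrite Dnum_balanced_pairs odd_card_swap_stable; last exact: balanced_pairs_swap.
suff -> : [set I | (I, I) \in balanced_pairs n k] = set0 by rewrite cards0.
apply/setP=> I; rewrite !inE addnn; apply/negbTE/negP=> /andP[/eqP k2 _].
by rewrite -k2 odd_double in k_odd.
Qed.

Lemma dnum11 n : dnum n 1 1 = n.
Proof.
have diag_inj : injective (fun I : {set 'I_n} => (I, I)) by move=> I J [].
rewrite -[RHS]card_ord -[RHS]bin1 -card_draws /dnum -(card_imset _ diag_inj).
apply: eq_card => -[I J]; rewrite !inE /=; apply/idP/imsetP.
- case/and3P=> /cards1P[i ->] /cards1P[j ->]; rewrite !setsum1 => /eqP[/val_inj->].
  by exists [set j]; rewrite ?inE ?cards1.
- by case=> K; rewrite inE => /eqP K1 [-> ->]; rewrite K1 !eqxx.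
Qed.

Lemma Dnum0 n : Dnum n 0 = 1.
Proof.
rewrite Dnum_balanced_pairs -(cards1 (set0 : {set 'I_n}, set0 : {set 'I_n})).
apply: eq_card => -[I J]; rewrite !inE /= xpair_eqE addn_eq0 !cards_eq0.
by apply/andP/andP=> [[/andP[-> ->]]|[/eqP-> /eqP->]] //; rewrite !eqxx.
Qed.

Lemma Dnum1 n : Dnum n 1 = 0.
Proof.
rewrite Dnum_balanced_pairs; apply/eqP; rewrite cards_eq0; apply/eqP/setP=> -[I J].
rewrite !inE /=; apply/negbTE/negP=> /andP[sizeIJ /eqP/eq_setsum_card_eq0].
by move: sizeIJ; move: #|I| #|J| => [|[|a]] [|[|b]].
Qed.

Lemma Dnum2 n : Dnum n 2 = n.
Proof.
rewrite Dnum_balanced_pairs -[RHS]dnum11; apply: eq_card => -[I J].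
rewrite !inE /=; case IJ: (setsum I == setsum J); last by rewrite !andbF.
move: (eq_setsum_card_eq0 (eqP IJ)); rewrite !andbT.
by move: #|I| #|J| => [|[|a]] [|[|b]] //=; rewrite !addnS.
Qed.

(* The pair (a, b) stands for the solution j_1 = a + 1 < j_2 = b + 1 with
   i_1 = j_1 + j_2 <= n. *)
Definition small_pairs n :=
  [set ab : 'I_n * 'I_n | (ab.1 < ab.2) && (ab.1 + ab.2 + 2 <= n)].

Lemma set2_ordered_inj n (a b c d : 'I_n) :
  a < b -> c < d -> [set a; b] = [set c; d] -> a = c /\ b = d.
Proof.
move=> ab cd abcd.
have mem2 (x y z : 'I_n) : x \in [set y; z] -> x = y :> nat \/ x = z :> nat.
  by rewrite in_set2 => /orP[/eqP->|/eqP->]; [left|right].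
have /mem2 ? : a \in [set c; d] by rewrite -abcd set21.
have /mem2 ? : b \in [set c; d] by rewrite -abcd set22.
have /mem2 ? : c \in [set a; b] by rewrite abcd set21.
have /mem2 ? : d \in [set a; b] by rewrite abcd set22.
suff [? ?] : a = c :> nat /\ b = d :> nat by split; apply: val_inj.
lia.
Qed.

Lemma dnum12_small_pairs n : dnum n 1 2 = #|small_pairs n|.
Proof.
pose sol (ab : 'I_n * 'I_n) := ([set insubd ab.1 (ab.1 + ab.2 + 1)], [set ab.1; ab.2]).
have sol_inj : {in small_pairs n &, injective sol}.
  move=> [a b] [c d]; rewrite !inE /= => /andP[ab _] /andP[cd _] [_ /set2_ordered_inj].
  by case/(_ ab cd)=> -> ->.
rewrite -(card_in_imset sol_inj) /dnum; apply: eq_card => -[I J].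
rewrite !inE /=; apply/idP/imsetP.
- case/and3P=> /cards1P[i ->] /cards2P[x [y [xy ->]]].
  rewrite setsum1 setsum2 // => /eqP sum_i; have := ltn_ord i.
  wlog lt_xy : x y xy sum_i / x < y.
    move=> gen; case: (ltngtP x y) => [|yx|/val_inj exy]; first exact: gen.
    - by rewrite setUC; apply: gen; rewrite 1?eq_sym // addnC.
    - by rewrite exy eqxx in xy.
  move=> i_n; exists (x, y); first by rewrite inE /=; apply/andP; split=> //; lia.
  congr (_, _); congr [set _]; apply: val_inj; rewrite insubdK /=; first lia.
  by rewrite unfold_in /=; lia.
- case=> -[a b]; rewrite inE /= => /andP[ab ab_n] [-> ->].
  have a_neq_b : a != b by rewrite neq_ltn ab.
  rewrite cards1 cards2 a_neq_b setsum1 setsum2 //= insubdK; last by rewrite unfold_in /=; lia.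
  by apply/eqP; lia.
Qed.

Lemma sum_ord_leq n m : \sum_(b < n) (b <= m) = minn n m.+1.
Proof. by elim: n => [|n IHn]; rewrite ?big_ord0 // big_ord_recr /= IHn; lia. Qed.

Lemma card_small_pairs n : #|small_pairs n| = \sum_(a < n) (n - (2 * a + 2)).
Proof.
rewrite -sum1dep_card.
rewrite -(pair_big_dep xpredT (fun a b : 'I_n => (a < b) && (a + b + 2 <= n)) (fun _ _ => 1)) /=.
apply: eq_bigr => a _; rewrite big_mkcond /=.
have:= ltn_ord a; set m := n - (a + 2) => a_n.
apply/eqP; rewrite -(eqn_add2r (\sum_(b < n) (b <= minn a m))) -big_split /=.
rewrite (eq_bigr (fun b : 'I_n => nat_of_bool (b <= m))) => [|b _]; last by case: ifP; lia.
by rewrite !sum_ord_leq; apply/eqP; lia.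
Qed.

Lemma sum_gaps_rec n :
  \sum_(a < n.+2) (n.+2 - (2 * a + 2)) = \sum_(a < n) (n - (2 * a + 2)) + n.
Proof.
rewrite big_ord_recl big_ord_recr /= /bump /=.
rewrite (eq_bigr (fun a : 'I_n => n - (2 * a + 2))) => [|a _]; lia.
Qed.

Lemma sum_gaps_double m : \sum_(a < 2 * m) (2 * m - (2 * a + 2)) = m * (m - 1).
Proof.
elim: m => [|m IHm]; first by rewrite big_ord0.
by rewrite (_ : 2 * m.+1 = (2 * m).+2) ?sum_gaps_rec ?IHm; nia.
Qed.

Lemma sum_gaps_double_succ m :
  \sum_(a < (2 * m).+1) ((2 * m).+1 - (2 * a + 2)) = m * m.
Proof.
elim: m => [|m IHm]; first by rewrite big_ord1.
by rewrite (_ : (2 * m.+1).+1 = (2 * m).+3) ?sum_gaps_rec ?IHm; nia.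
Qed.

Lemma dnum12_even n : ~~ odd n -> dnum n 1 2 = n * (n - 2) %/ 4.
Proof.
move=> n_even; rewrite -(odd_double_half n) (negPf n_even) add0n -mul2n.
rewrite dnum12_small_pairs card_small_pairs sum_gaps_double.
by rewrite (_ : 2 * _ * _ = n./2 * (n./2 - 1) * 4) ?mulnK //; lia.
Qed.

Lemma dnum12_odd n : odd n -> dnum n 1 2 = ((n - 1) %/ 2) ^ 2.
Proof.
move=> n_odd; rewrite -(odd_double_half n) n_odd add1n -mul2n.
rewrite dnum12_small_pairs card_small_pairs sum_gaps_double_succ.
by rewrite subSS subn0 mulKn.
Qed.

Theorem lemma4p13 (n : nat) (hn : 2 <= n) :
  (* (i) *)
  [/\ dnum n 1 1 = n, dnum n n.-1 n.-1 = n &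
      forall k, k <= n -> dnum n k k = 'C(n, k) %[mod 2]] /\
  (* (ii) *)
  (~~ odd n -> dnum n 1 2 = (n * (n - 2)) %/ 4) /\
  (odd n -> dnum n 1 2 = ((n - 1) %/ 2) ^ 2) /\
  (* (iii) *)
  [/\ forall k, k <= n -> Dnum n k = Dnum n (2 * n - k),
      Dnum n 0 = 1, Dnum n 1 = 0 & Dnum n 2 = n] /\
  (* (iv) *)
  (forall k, k <= 2 * n -> odd k -> ~~ odd (Dnum n k)) /\
  (* (v) *)
  (forall k, k <= n -> Dnum n (2 * k) = 'C(n, k) %[mod 2]).
Proof.
split; [split|split; [|split; [|split; [split|split]]]].
- exact: dnum11.
- by rewrite -subn1 dnum_compl ?dnum11 // ltnW.
- by move=> k _; rewrite !modn2 odd_dnum_diag.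
- exact: dnum12_even.
- exact: dnum12_odd.
- by move=> k kn; rewrite Dnum_compl //; lia.
- exact: Dnum0.
- exact: Dnum1.
- exact: Dnum2.
- by move=> k _; apply: even_Dnum_odd.
- by move=> k _; rewrite !modn2 odd_Dnum_double.
Qed.
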